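(* Let $s$ be a positive integer and let $G$ be an $n$-vertex $K_{s,s}$-free graph. If $e(G)>6^s s\cdot n^{3/2}$, then the number of induced copies of the $4$-cycle $C_4$ in $G$ is at least $\frac{e(G)^4}{16n^4}$.
   Context: $G$ is $K_{s,s}$-free if it contains no copy of $K_{s,s}$ as a subgraph. An induced copy of $C_4$ is a set of four vertices $u,x,v,y$ with $ux,xv,vy,yu\in E(G)$ and $uv,xy\notin E(G)$ (counted as unlabeled subgraphs). *)

From mathcomp Require Import all_boot.
From Stdlib Require Import Reals.
Set Implicit Arguments.
Unset Strict Implicit.
Unset Printing Implicit Defensive.

Definition simple_graph (T : finType) (e : rel T) : Prop :=
  symmetric e /\ irreflexive e.

Definition edges (T : finType) (e : rel T) : {set {set T}} :=
  [set E : {set T} | (#|E| == 2) &&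
     [exists x, exists y, (E == [set x; y]) && e x y]].

Definition nedges (T : finType) (e : rel T) : nat := #|edges e|.

Definition has_Kss (T : finType) (e : rel T) (s : nat) : Prop :=
  exists A B : {set T},
    [/\ #|A| = s, #|B| = s, [disjoint A & B] &
        forall a b, a \in A -> b \in B -> e a b].

Definition Kss_free (T : finType) (e : rel T) (s : nat) : Prop :=
  ~ has_Kss e s.

Definition induced_C4_set (T : finType) (e : rel T) (S : {set T}) : bool :=
  [exists u, exists x, exists v, exists y,
     [&& S == [set u; x; v; y], #|S| == 4,
         e u x, e x v, e v y, e y u, ~~ e u v & ~~ e x y]].

(* Number of induced copies of C4 (unlabeled): each such 4-set carries
   exactly one induced C4. *)
Definition n_induced_C4 (T : finType) (e : rel T) : nat :=
  #|[set S : {set T} | induced_C4_set e S]|.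

(* Write codeg p for the number of common neighbours of a pair p = (x, y), and sum over the
   ordered pairs with x <> y: T = sum codeg and S = sum codeg^2.  Then S - T counts the
   quadruples (x, y, u, v) with x <> y, u <> v and x, y both adjacent to u, v; such a quadruple
   is an induced C4 with diagonals {x, y} and {u, v} unless uv or xy is an edge.
   In a K_{s,s}-free graph the neighbourhood of a vertex x is sparse: s - 1 distinct neighbours
   of x have at most s - 1 common neighbours adjacent to x, so a set W of m neighbours of x
   satisfies sum_(u in W) deg_W(u)^(s-1) = O_s(m^(s-1)), and by the power mean inequality W
   spans at most m^2/4 + O_s(m) ordered edges.  Applied to the common neighbourhood of (x, y),
   this bounds the quadruples in which uv is an edge, and by symmetry those in which xy is one,
   by S/4 + O_s(T) each; hence S <= 2 Q + O_s(T) with Q <= 24 * #(induced C4).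
   Cauchy-Schwarz gives T >= D^2/n - D for the degree sum D >= 2 e(G), and S >= T^2/n^2; the
   hypothesis e(G) > 6^s s n^(3/2) makes the error terms negligible. *)

From Stdlib Require Import Reals Lra Psatz.
From mathcomp Require Import all_boot zify.
(* MathComp rebinds the delimiter %R to its ring scope; here it must denote the reals. *)
Delimit Scope R_scope with R.
Set Implicit Arguments.
Unset Strict Implicit.
Unset Printing Implicit Defensive.

Lemma sum_bool_card (I : finType) (A : {pred I}) : \sum_i (i \in A : nat) = #|A|.
Proof. by rewrite -sum1_card [RHS]big_mkcond; apply: eq_bigr => i _; case: (i \in A). Qed.

Lemma sum_pairE (I J : finType) (F : I * J -> nat) :
  \sum_p F p = \sum_i \sum_j F (i, j).
Proof. by rewrite pair_bigA; apply: eq_bigr => -[]. Qed.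

Lemma sum_andb (I J : finType) (P : pred I) (Q : I -> J -> bool) (F : I -> nat) :
  (forall i, \sum_j (Q i j : nat) = F i) ->
  \sum_i \sum_j (P i && Q i j : nat) = \sum_(i | P i) F i.
Proof.
move=> sumQ; rewrite [RHS]big_mkcond; apply: eq_bigr => i _.
by case: (P i); rewrite ?sumQ // big1.
Qed.

Lemma leq_rearrange (a b k : nat) : a * b ^ k + b * a ^ k <= a ^ k.+1 + b ^ k.+1.
Proof.
wlog le_ab : a b / a <= b.
  by move=> H; case: (leqP a b) => [/H | /ltnW/H]; rewrite // addnC [_ + b ^ _]addnC.
have le_abk : a ^ k <= b ^ k by case: k => // k; rewrite leq_exp2r.
rewrite !expnS; move: (subnK le_abk) (subnK le_ab).
set dk := b ^ k - a ^ k; set d := b - a => <- <-; nia.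
Qed.

Section PowerMean.

Variables (I : finType) (P : pred I) (f : I -> nat).

Lemma chebyshev_sum k :
  (\sum_(i in P) f i) * (\sum_(i in P) f i ^ k) <= #|P| * \sum_(i in P) f i ^ k.+1.
Proof.
rewrite -(leq_pmul2l (isT : 0 < 2)).
have -> : 2 * (#|P| * \sum_(i in P) f i ^ k.+1) =
          \sum_(i in P) \sum_(j in P) (f i ^ k.+1 + f j ^ k.+1).
  rewrite [RHS](eq_bigr (fun i => #|P| * f i ^ k.+1 + \sum_(j in P) f j ^ k.+1)).
    by rewrite big_split /= -big_distrr /= sum_nat_const; lia.
  by move=> i _; rewrite big_split /= sum_nat_const.
have -> : 2 * ((\sum_(i in P) f i) * (\sum_(i in P) f i ^ k)) =
          \sum_(i in P) \sum_(j in P) (f i * f j ^ k + f j * f i ^ k).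
  rewrite [RHS](eq_bigr (fun i => f i * \sum_(j in P) f j ^ k + (\sum_(j in P) f j) * f i ^ k)).
    by rewrite big_split /= -!big_distrl -big_distrr /=; lia.
  by move=> i _; rewrite big_split /= big_distrr big_distrl.
by apply: leq_sum => i _; apply: leq_sum => j _; apply: leq_rearrange.
Qed.

Lemma power_mean k :
  (\sum_(i in P) f i) ^ k.+1 <= #|P| ^ k * \sum_(i in P) f i ^ k.+1.
Proof.
elim: k => [|k IH]; first by rewrite mul1n; apply: leq_sum => i _.
rewrite expnS (expnS #|P|) -mulnA.
apply: leq_trans (leq_mul (leqnn _) IH) _.
by rewrite mulnCA [X in _ <= X]mulnCA leq_mul2l chebyshev_sum orbT.
Qed.

Lemma cauchy_schwarz :
  (\sum_(i in P) f i) ^ 2 <= #|P| * \sum_(i in P) f i ^ 2.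
Proof. exact: power_mean 1. Qed.

End PowerMean.

Lemma ffact_leq_expn (m k : nat) : m ^_ k <= m ^ k.
Proof. by elim: k => // k IH; rewrite ffactnSr expnSr leq_mul // leq_subr. Qed.

Lemma expn_leq_ffact (m k : nat) : m ^ k.+1 <= m ^_ k.+1 + k.+1 ^ 2 * m ^ k.
Proof.
elim: k => [|k IH]; first by rewrite ffactn1 expn1; lia.
have ffact_le : m * m ^_ k.+1 <= m ^_ k.+2 + k.+1 * m ^ k.+1.
  rewrite [m ^_ k.+2]ffactnSr.
  case: (leqP k.+1 m) => [le_km | lt_mk]; last by rewrite ffact_small ?muln0.
  by rewrite -{1}(subnK le_km) mulnDl mulnC leq_add2l leq_mul2l ffact_leq_expn orbT.
have := leq_mul (leqnn m) IH; rewrite -expnS mulnDr mulnCA -expnS; nia.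
Qed.

Lemma noninjective_tuples_le (T : finType) (W : {pred T}) (k : nat) :
  \sum_(f : {ffun 'I_k.+1 -> T}) ((f \in ffun_on W) && ~~ injectiveb f : nat) <=
  k.+1 ^ 2 * #|W| ^ k.
Proof.
have all_tuples :
    \sum_(f : {ffun 'I_k.+1 -> T}) ((f \in ffun_on W) && injectiveb f : nat) +
    \sum_(f : {ffun 'I_k.+1 -> T}) ((f \in ffun_on W) && ~~ injectiveb f : nat) =
    #|W| ^ k.+1.
  rewrite -big_split /= -[k.+1 in RHS]card_ord -card_ffun_on -sum_bool_card.
  by apply: eq_bigr => f _; case: (f \in ffun_on W); case: (injectiveb f).
have injective :
    \sum_(f : {ffun 'I_k.+1 -> T}) ((f \in ffun_on W) && injectiveb f : nat) = #|W| ^_ k.+1.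
  rewrite -[k.+1 in RHS]card_ord -card_inj_ffuns_on -sum_bool_card.
  by apply: eq_bigr => f _; rewrite inE.
have := expn_leq_ffact #|W| k; lia.
Qed.

Lemma leq_of_moment_bound (a m c k : nat) :
  a <= m ^ 2 -> a ^ k.+1 <= c * m ^ k.*2.+1 ->
  4 * a <= m ^ 2 + 4 * (4 ^ k.+1 * c) * m.
Proof.
move=> le_a_m2 moment; case: (leqP (4 * a) (m ^ 2)) => [le_4a | lt_m2].
  exact: leq_trans le_4a (leq_addr _ _).
have lt_m : m < 4 ^ k.+1 * c.
  have : (m ^ 2) ^ k.+1 < (4 * a) ^ k.+1 by rewrite ltn_exp2r.
  have -> : (m ^ 2) ^ k.+1 = m * m ^ k.*2.+1 by rewrite -expnM -expnS; congr (m ^ _); lia.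
  rewrite expnMn => /leq_trans/(_ (leq_mul (leqnn _) moment)).
  rewrite mulnA ltn_mul2r.
  by case/andP.
rewrite -[X in X <= _]add0n leq_add //.
have := leq_mul (leqnn (4 * m)) (ltnW lt_m); have := leq_mul (leqnn 4) le_a_m2; nia.
Qed.

Section Graph.

Variables (T : finType) (e : rel T).
Hypotheses (e_sym : symmetric e) (e_irr : irreflexive e).

Definition nb (x : T) : {set T} := [set y | e x y].

Lemma Kss_free_joined_lt s (A B : {set T}) :
  Kss_free e s -> #|A| = s -> {in A & B, forall a b, e a b} -> #|B| < s.
Proof.
move=> Kss_free_e cardA joinedAB; rewrite ltnNge; apply/negP => /card_geqP.
case=> t [t_uniq t_size t_sub]; apply: Kss_free_e.
exists A, [set b in t]; split=> //.
- by rewrite cardsE (card_uniqP t_uniq).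
- rewrite disjoints_subset; apply/subsetP => a aA; rewrite !inE.
  apply/negP => /t_sub aB.
  by have := joinedAB a a aA aB; rewrite e_irr.
- by move=> a b aA; rewrite inE => /t_sub; apply: joinedAB.
Qed.

Lemma K11_free_nb x : Kss_free e 1 -> nb x = set0.
Proof.
move=> K11_free; apply/eqP; rewrite -cards_eq0 -leqn0.
apply: (Kss_free_joined_lt K11_free (cards1 x)) => a b.
by rewrite !inE => /eqP ->.
Qed.

Section Neighbourhood.

Variables (k : nat) (x : T) (W : {set T}).
Hypotheses (Kss_free_e : Kss_free e k.+2) (W_sub : W \subset nb x).

(* Otherwise x and the entries of f would be one side of a K_{k+2,k+2}. *)
Lemma injective_tuple_common_nbs (f : {ffun 'I_k.+1 -> T}) :
  f \in ffun_on W -> injectiveb f -> #|[set u in W | f \in ffun_on (W :&: nb u)]| <= k.+1.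
Proof.
move=> /ffun_onP f_W /injectiveP f_inj.
have ex_W w : w \in W -> e x w by move/(subsetP W_sub); rewrite inE.
rewrite -ltnS; apply: (Kss_free_joined_lt (A := x |: [set f i | i in 'I_k.+1])) => //.
- rewrite cardsU1 card_imset // card_ord.
  suff /negPf -> : x \notin [set f i | i in 'I_k.+1] by [].
  by apply/imsetP=> -[i _ xE]; have := ex_W _ (f_W i); rewrite -xE e_irr.
- move=> a u; rewrite !inE => /orP [/eqP -> | /imsetP [i _ ->]] /andP [uW /ffun_onP f_on].
    exact: ex_W.
  by have := f_on i; rewrite !inE e_sym => /andP [].
Qed.

Lemma tuple_common_nbs_le (f : {ffun 'I_k.+1 -> T}) :
  #|[set u in W | f \in ffun_on (W :&: nb u)]| <=
  k.+1 * (f \in ffun_on W) + #|W| * ((f \in ffun_on W) && ~~ injectiveb f).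
Proof.
case f_W: (f \in ffun_on W) => /=; last first.
  rewrite !muln0 leqn0 cards_eq0; apply/eqP/setP => u; rewrite !inE.
  apply/negbTE/negP => /andP [_ /ffun_onP f_on]; move/negP: f_W; apply.
  by apply/ffun_onP => i; have := f_on i; rewrite inE => /andP [].
case: (boolP (injectiveb f)) => [f_inj | _] /=.
  by rewrite muln1 muln0 addn0 injective_tuple_common_nbs.
rewrite !muln1 (leq_trans _ (leq_addl _ _)) // subset_leq_card //.
by apply/subsetP => u; rewrite inE => /andP [].
Qed.

Lemma nbhd_degree_moment :
  \sum_(u in W) #|W :&: nb u| ^ k.+1 <= k.+1 * k.+2 * #|W| ^ k.+1.
Proof.
have count_tuples u : #|W :&: nb u| ^ k.+1 =
    \sum_(f : {ffun 'I_k.+1 -> T}) (f \in ffun_on (W :&: nb u) : nat).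
  by rewrite sum_bool_card card_ffun_on card_ord.
rewrite (eq_bigr _ (fun u _ => count_tuples u)) exchange_big /=.
apply: leq_trans.
  apply: leq_sum => f _; rewrite -big_mkcondr /= sum1dep_card.
  exact: tuple_common_nbs_le.
rewrite big_split /= -!big_distrr /= sum_bool_card card_ffun_on card_ord.
have := leq_mul (leqnn #|W|) (noninjective_tuples_le W k).
rewrite mulnCA -expnS => noninj.
apply: leq_trans (leq_add (leqnn _) noninj) _; rewrite -mulnDl leq_mul2r; nia.
Qed.

Lemma nbhd_edge_density :
  4 * \sum_(u in W) #|W :&: nb u| <= #|W| ^ 2 + 4 * (4 ^ k.+1 * (k.+1 * k.+2)) * #|W|.
Proof.
apply: leq_of_moment_bound.
  rewrite -mulnn -sum_nat_const; apply: leq_sum => u _.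
  exact: subset_leq_card (subsetIl _ _).
apply: leq_trans (power_mean _ _ k) _.
have -> : k.*2.+1 = k + k.+1 by lia.
by rewrite expnD mulnCA leq_mul2l nbhd_degree_moment orbT.
Qed.

End Neighbourhood.

Definition common_nb (p : T * T) : {set T} := nb p.1 :&: nb p.2.

Definition biadj (p q : T * T) : bool := (q.1 \in common_nb p) && (q.2 \in common_nb p).

Definition nonedge (p : T * T) : bool := (p.1 != p.2) && ~~ e p.1 p.2.

(* Induced 4-cycles, as ordered pairs of their ordered diagonals. *)
Definition C4_quads : {set (T * T) * (T * T)} :=
  [set pq | [&& nonedge pq.1, nonedge pq.2 & biadj pq.1 pq.2]].

Lemma biadjC p q : biadj p q = biadj q p.
Proof.
rewrite /biadj !inE (e_sym p.1 q.1) (e_sym p.1 q.2) (e_sym p.2 q.1) (e_sym p.2 q.2).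
by case: (e q.1 p.1); case: (e q.1 p.2); case: (e q.2 p.1); case: (e q.2 p.2).
Qed.

Lemma sum_biadj p : \sum_q (biadj p q : nat) = #|common_nb p| ^ 2.
Proof.
rewrite -mulnn -cardsX -sum_bool_card; apply: eq_bigr => q _.
by case: q => x y; rewrite in_setX.
Qed.

Lemma sum_biadj_diag p : \sum_q ((q.1 == q.2) && biadj p q : nat) = #|common_nb p|.
Proof.
rewrite sum_pairE -sum_bool_card; apply: eq_bigr => x _ /=.
rewrite (bigD1 x) //= eqxx big1 => [|y /negPf]; last by rewrite eq_sym => ->.
by rewrite /biadj /= andbb addn0.
Qed.

Lemma sum_biadj_edge p :
  \sum_q (e q.1 q.2 && biadj p q : nat) = \sum_(u in common_nb p) #|common_nb p :&: nb u|.
Proof.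
rewrite sum_pairE [RHS]big_mkcond; apply: eq_bigr => x _ /=.
case: (boolP (x \in common_nb p)) => x_p; last first.
  by rewrite big1 // => y _; rewrite /biadj (negPf x_p) andbF.
rewrite -sum_bool_card; apply: eq_bigr => y _.
by rewrite /biadj /= x_p !inE andbC.
Qed.

Lemma C4_quads_sum :
  #|C4_quads| = \sum_p \sum_q [&& nonedge p, nonedge q & biadj p q].
Proof.
rewrite -sum_bool_card [LHS]sum_pairE; apply: eq_bigr => p _; apply: eq_bigr => q _.
by rewrite inE.
Qed.

(* For an off-diagonal p, a pair q in common_nb p is diagonal, an edge, or a non-edge; in the
   last case p is either an edge (counted like the second case after swapping p and q) or a
   non-edge, and then p and q are the diagonals of an induced C4. *)
Lemma sum_codeg_sqr_le k : Kss_free e k.+2 ->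
  \sum_(p | p.1 != p.2) #|common_nb p| ^ 2 <=
  2 * #|C4_quads| +
  (4 * (4 ^ k.+1 * (k.+1 * k.+2)) + 2) * \sum_(p | p.1 != p.2) #|common_nb p|.
Proof.
move=> Kss_free_e.
set L := 4 ^ k.+1 * (k.+1 * k.+2).
set S2 := \sum_(p | p.1 != p.2) #|common_nb p| ^ 2.
set S1 := \sum_(p | p.1 != p.2) #|common_nb p|.
set A := \sum_(p | p.1 != p.2) \sum_(u in common_nb p) #|common_nb p :&: nb u|.
have S2E : S2 = \sum_p \sum_q ((p.1 != p.2) && biadj p q).
  by rewrite (sum_andb _ sum_biadj).
have S1E : S1 = \sum_p \sum_q ((p.1 != p.2) && ((q.1 == q.2) && biadj p q)).
  by rewrite (sum_andb _ sum_biadj_diag).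
have AE : A = \sum_p \sum_q ((p.1 != p.2) && (e q.1 q.2 && biadj p q)).
  by rewrite (sum_andb _ sum_biadj_edge).
have AE' : A = \sum_p \sum_q (e p.1 p.2 && ((q.1 != q.2) && biadj p q)).
  rewrite AE exchange_big; apply: eq_bigr => q _; apply: eq_bigr => p _.
  by rewrite biadjC; case: (p.1 != p.2); case: (e q.1 q.2).
have four_cases : S2 <= S1 + A + #|C4_quads| + A.
  rewrite S2E S1E {1}AE C4_quads_sum AE' -!big_split.
  apply: leq_sum => p _; rewrite -!big_split; apply: leq_sum => q _ /=.
  rewrite /nonedge; case: (p.1 != p.2); case: (biadj p q); rewrite ?andbF //=.
  by case: (q.1 == q.2); case: (e q.1 q.2); case: (e p.1 p.2).
have density : 4 * A <= S2 + 4 * L * S1.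
  rewrite /A /S2 /S1 !big_distrr -big_split; apply: leq_sum => p _ /=.
  exact: (nbhd_edge_density (x := p.1) Kss_free_e (subsetIl _ _)).
nia.
Qed.

Lemma sum_codeg : \sum_p #|common_nb p| = \sum_z #|nb z| ^ 2.
Proof.
rewrite (eq_bigr (fun p => \sum_z (z \in common_nb p : nat))) => [|p _]; last first.
  by rewrite sum_bool_card.
rewrite exchange_big; apply: eq_bigr => z _.
rewrite -mulnn -cardsX -sum_bool_card; apply: eq_bigr => -[x y] _.
by rewrite in_setX !inE (e_sym x) (e_sym y).
Qed.

Lemma sum_codeg_offdiag :
  \sum_(p | p.1 != p.2) #|common_nb p| + \sum_z #|nb z| = \sum_z #|nb z| ^ 2.
Proof.
rewrite -sum_codeg [RHS](bigID (fun p : T * T => p.1 == p.2)) addnC /=; congr (_ + _).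
rewrite [RHS]big_mkcond sum_pairE; apply: eq_bigr => x _ /=.
rewrite (bigD1 x) //= eqxx big1 ?addn0 => [|y]; first by rewrite /common_nb setIid.
by rewrite eq_sym => /negPf ->.
Qed.

Lemma two_nedges_le : 2 * nedges e <= \sum_z #|nb z|.
Proof.
have -> : 2 * nedges e = \sum_(E in edges e) #|E|.
  rewrite /nedges mulnC -sum_nat_const; apply: eq_bigr => E.
  by rewrite inE => /andP [/eqP ->].
rewrite (eq_bigr (fun E : {set T} => \sum_z (z \in E : nat))) => [|E _]; last first.
  by rewrite sum_bool_card.
rewrite exchange_big; apply: leq_sum => z _ /=.
rewrite -big_mkcondr /= sum1dep_card.
apply: leq_trans (leq_imset_card (fun y => [set z; y]) (nb z)); apply: subset_leq_card.
apply/subsetP => E; rewrite !inE => /andP [/andP [_ /existsP [x /existsP [y]]]].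
case/andP => /eqP -> exy; rewrite !inE => /orP [] /eqP zE; apply/imsetP; rewrite zE.
  by exists y; rewrite ?inE.
by exists x; rewrite ?inE 1?e_sym // setUC.
Qed.

Definition quad_set (pq : (T * T) * (T * T)) : {set T} := [set pq.2.1; pq.1.1; pq.2.2; pq.1.2].

Lemma C4_quadsP x y u v : ((x, y), (u, v)) \in C4_quads ->
  [/\ uniq [:: u; x; v; y], [&& e u x, e x v, e v y & e y u] & ~~ e u v && ~~ e x y].
Proof.
rewrite !inE /nonedge /biadj !inE /=.
case/and3P => /andP [xy not_exy] /andP [uv not_euv] /andP [/andP [exu eyu] /andP [exv eyv]].
have neq a b : e a b -> a != b by apply: contraTneq => ->; rewrite e_irr.
rewrite /= !inE !negb_or (eq_sym u) (neq _ _ exu) uv (eq_sym u) (neq _ _ eyu).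
rewrite (neq _ _ exv) xy (eq_sym v) (neq _ _ eyv) not_euv not_exy.
by rewrite (e_sym u) exu exv (e_sym v) eyv eyu.
Qed.

Lemma card_set4 (u x v y : T) : uniq [:: u; x; v; y] -> #|[set u; x; v; y]| = 4.
Proof.
have -> : [set u; x; v; y] = [set w in [:: u; x; v; y]].
  by apply/setP => w; rewrite !inE !orbA.
by rewrite cardsE => /card_uniqP ->.
Qed.

Lemma quad_set_induced pq : pq \in C4_quads -> induced_C4_set e (quad_set pq).
Proof.
case: pq => [[x y] [u v]] /C4_quadsP [quniq edges4 nonedges2].
apply/existsP; exists u; apply/existsP; exists x; apply/existsP; exists v; apply/existsP; exists y.
case/and4P: edges4 => -> -> -> ->; case/andP: nonedges2 => -> ->.
by rewrite /quad_set /= eqxx card_set4.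
Qed.

Lemma quad_fiber_card pq0 : pq0 \in C4_quads ->
  #|[set pq in C4_quads | quad_set pq == quad_set pq0]| <= 24.
Proof.
move=> pq0_C4; set S := quad_set pq0.
have cardS : #|S| = 4.
  by case: pq0 pq0_C4 @S => [[x y] [u v]] /C4_quadsP [/card_set4].
pose tup (pq : (T * T) * (T * T)) : 4.-tuple T := [tuple pq.2.1; pq.1.1; pq.2.2; pq.1.2].
have tup_inj : injective tup.
  by move=> [[x y] [u v]] [[x' y'] [u' v']] /(congr1 val) [-> -> -> ->].
have -> : 24 = #|[set t : 4.-tuple T | all [in S] t & uniq t]|.
  by rewrite card_uniq_tuples cardS.
rewrite -(card_imset _ tup_inj) subset_leq_card //.
apply/subsetP => t /imsetP [[[x y] [u v]] fiber ->]; rewrite inE in fiber.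
case/andP: fiber => /C4_quadsP [quniq _ _] /eqP <-.
by rewrite inE quniq andbT /= !inE !eqxx !orbT.
Qed.

Lemma C4_quads_card_le : #|C4_quads| <= 24 * n_induced_C4 e.
Proof.
rewrite -sum1_card (partition_big_imset quad_set) /=.
apply: (@leq_trans (\sum_(S in quad_set @: C4_quads) 24)).
  apply: leq_sum => S /imsetP [pq0 pq0_C4 ->].
  by rewrite sum1dep_card quad_fiber_card.
rewrite sum_nat_const mulnC leq_mul2l subset_leq_card ?orbT //.
by apply/subsetP => S /imsetP [pq pq_C4 ->]; rewrite inE quad_set_induced.
Qed.

Lemma sqr_sum_deg_le :
  (\sum_z #|nb z|) ^ 2 <= #|T| * (\sum_(p | p.1 != p.2) #|common_nb p| + \sum_z #|nb z|).
Proof. by rewrite sum_codeg_offdiag; apply: cauchy_schwarz. Qed.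

Lemma sqr_sum_codeg_le k : Kss_free e k.+2 ->
  (\sum_(p | p.1 != p.2) #|common_nb p|) ^ 2 <=
  #|T| ^ 2 * (48 * n_induced_C4 e +
              (4 * (4 ^ k.+1 * (k.+1 * k.+2)) + 2) * \sum_(p | p.1 != p.2) #|common_nb p|).
Proof.
move=> Kss_free_e.
apply: leq_trans (cauchy_schwarz [pred p : T * T | p.1 != p.2] _) _.
apply: leq_mul.
  by rewrite -mulnn -card_prod max_card.
apply: leq_trans (sum_codeg_sqr_le Kss_free_e) _.
by rewrite leq_add2r -[48]/(2 * 24) -mulnA leq_mul2l C4_quads_card_le.
Qed.

End Graph.

Section RealBound.

Local Open Scope R_scope.

Lemma C4_count_real_bound (n D S1 N E C X : R) :
  n = 0 \/ 1 <= n -> 0 <= S1 -> 0 <= C -> 6 <= X ->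
  D ^ 2 <= n * (S1 + D) ->
  S1 ^ 2 <= n ^ 2 * (48 * N + C * S1) ->
  2 * E <= D -> 18 * C <= X ^ 2 -> X * (n * sqrt n) < E ->
  E ^ 4 / (16 * n ^ 4) <= N.
Proof.
move=> [-> | n_ge1] S1_ge0 C_ge0 X_ge6 cauchy_deg cauchy_codeg handshake C_le E_gt.
  rewrite sqrt_0 in E_gt; nra.
have sqrt_n := sqrt_sqrt n ltac:(lra).
have sqrt_ge0 := sqrt_pos n.
have Xn_ge0 : 0 <= X * (n * sqrt n) by apply: Rmult_le_pos; [lra | nra].
have E2_gt : X ^ 2 * n ^ 3 < E ^ 2.
  have -> : X ^ 2 * n ^ 3 = (X * (n * sqrt n)) ^ 2.
    by rewrite -sqrt_n; ring_simplify; rewrite sqrt_n; ring.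
  nra.
have D2_ge : 16 * n ^ 2 <= D ^ 2.
  have n3_ge : n ^ 2 <= n ^ 3 by rewrite /= -[X in X <= _]Rmult_1_l; nra.
  have : 36 * n ^ 3 <= X ^ 2 * n ^ 3 by apply: Rmult_le_compat_r; nra.
  nra.
have D_ge : 4 * n <= D by nra.
have nD_le : n * D <= 1 / 4 * D ^ 2 by nra.
have S1_ge : 3 / 4 * D ^ 2 <= n * S1 by rewrite Rmult_plus_distr_l in cauchy_deg; lra.
have Cn_le : n * (C * n ^ 2) <= 1 / 4 * D ^ 2.
  have : 18 * C * n ^ 3 <= X ^ 2 * n ^ 3 by apply: Rmult_le_compat_r; nra.
  have : 4 * E ^ 2 <= D ^ 2 by nra.
  have -> : n * (C * n ^ 2) = C * n ^ 3 by ring.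
  nra.
have S1C_ge : 1 / 2 * D ^ 2 <= n * (S1 - C * n ^ 2) by nra.
have quad : 3 / 8 * D ^ 4 <= 48 * n ^ 4 * N.
  have : 3 / 4 * D ^ 2 * (1 / 2 * D ^ 2) <= n * S1 * (n * (S1 - C * n ^ 2)).
    by apply: Rmult_le_compat; nra.
  have : n ^ 2 * (S1 ^ 2 - n ^ 2 * (C * S1)) <= n ^ 2 * (n ^ 2 * (48 * N)).
    by apply: Rmult_le_compat_l; nra.
  nra.
have n4_gt0 : 0 < 16 * n ^ 4 by have := pow_lt n 4; lra.
apply: (Rmult_le_reg_r (16 * n ^ 4)) => //.
have E4_le : (2 * E) ^ 4 <= D ^ 4 by apply: pow_incr; lra.
have E4_ge0 : 0 <= E ^ 4 by apply: pow_le; lra.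
rewrite /Rdiv Rmult_assoc Rinv_l; lra.
Qed.

End RealBound.

Lemma INR_leq (m n : nat) : m <= n -> (INR m <= INR n)%R.
Proof. by move/leP; apply: le_INR. Qed.

Lemma INR_expn (m k : nat) : INR (m ^ k) = (INR m ^ k)%R.
Proof. by elim: k => // k IH; rewrite expnS mult_INR IH. Qed.

Lemma C4_count_bound_nat (n D S1 N E C s : nat) :
  0 < s ->
  D ^ 2 <= n * (S1 + D) ->
  S1 ^ 2 <= n ^ 2 * (48 * N + C * S1) ->
  2 * E <= D ->
  18 * C <= (6 ^ s * s) ^ 2 ->
  (6 ^ s * INR s * (INR n * sqrt (INR n)) < INR E)%R ->
  (INR E ^ 4 / (16 * INR n ^ 4) <= INR N)%R.
Proof.
move=> s_gt0 cauchy_deg cauchy_codeg handshake C_le E_gt.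
have lit k : INR k = IZR (Z.of_nat k) := INR_IZR_INZ k.
apply: (C4_count_real_bound (D := INR D) (S1 := INR S1) (C := INR C) _ _ _ _ _ _ _ _ E_gt).
- case: n {cauchy_deg cauchy_codeg E_gt} => [|n]; [by left | right].
  by rewrite S_INR; have := pos_INR n; lra.
- exact: pos_INR.
- exact: pos_INR.
- have : 6 <= 6 ^ s * s by rewrite -[6]muln1 leq_mul // -{1}(expn1 6) leq_pexp2l.
  by move/INR_leq; rewrite !(mult_INR, INR_expn) (lit 6).
- by move: cauchy_deg => /INR_leq; rewrite !(mult_INR, plus_INR, INR_expn).
- by move: cauchy_codeg => /INR_leq; rewrite !(mult_INR, plus_INR, INR_expn) (lit 48).
- by move: handshake => /INR_leq; rewrite mult_INR (lit 2).
- by move: C_le => /INR_leq; rewrite !(mult_INR, INR_expn) (lit 18) (lit 6).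
Qed.

Lemma codeg_constant_le (k : nat) :
  18 * (4 * (4 ^ k.+1 * (k.+1 * k.+2)) + 2) <= (6 ^ k.+2 * k.+2) ^ 2.
Proof.
have le46 : 4 ^ k.+1 <= 6 ^ k.+1 by rewrite leq_exp2r.
have ge6 : 6 <= 6 ^ k.+1 by rewrite -{1}(expn1 6) leq_pexp2l.
rewrite (expnS 6 k.+1); set P := 6 ^ k.+1; set Q := 4 ^ k.+1.
have : 6 * Q <= P * P by rewrite mulnC leq_mul.
nia.
Qed.

Theorem theorem5p2 (T : finType) (e : rel T) (s : nat) :
  simple_graph e ->
  0 < s ->
  Kss_free e s ->
  (6 ^ s * INR s * (INR #|T| * sqrt (INR #|T|)) < INR (nedges e))%R ->
  (INR (nedges e) ^ 4 / (16 * INR #|T| ^ 4) <= INR (n_induced_C4 e))%R.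
Proof.
move=> [e_sym e_irr] s_gt0 Kss_free_e E_gt.
have handshake := two_nedges_le e_sym.
case: s s_gt0 Kss_free_e E_gt => [//|[|k]] s_gt0 Kss_free_e E_gt.
  have -> : nedges e = 0.
    move: handshake; rewrite big1 => [|z _]; first by rewrite leqn0 muln_eq0 => /eqP.
    by rewrite K11_free_nb // cards0.
  rewrite pow_i; last exact/ltP.
  by rewrite /Rdiv Rmult_0_l; apply: pos_INR.
apply: C4_count_bound_nat s_gt0 _ _ handshake (codeg_constant_le k) E_gt.
- exact: sqr_sum_deg_le.
- exact: sqr_sum_codeg_le.
Qed.
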